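(* Let $\Phi$ be a root system of type $A_r$ with the usual numbering of simple roots, and let $j$ be an integer with $1\le j\le \frac{r+1}{2}$. Then $$v_j(\Phi)=v_{r+1-j}(\Phi)\ge j\max(1,\log r-\log j),$$ where $\log$ is the natural logarithm.
   Context: For a reduced irreducible root system $\Phi$ with simple roots $\alpha_1,\ldots,\alpha_r$, write each positive root as $\beta=\sum_{j=1}^r a_{\beta,j}\alpha_j$ with non-negative integers $a_{\beta,j}$, and set $v_j(\Phi)=\sum_{\beta\in\Phi^+}\frac{a_{\beta,j}}{\sum_{k=1}^r a_{\beta,k}}$. For type $A_r$ with usual numbering, the positive roots are $\alpha_i+\cdots+\alpha_k$, $1\le i\le k\le r$. *)

From HB Require Import structures.
From mathcomp Require Import all_boot all_order all_algebra.
From mathcomp Require Import all_classical all_reals all_analysis.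
Set Implicit Arguments. Unset Strict Implicit. Unset Printing Implicit Defensive.
Import Order.TTheory GRing.Theory Num.Theory.
Local Open Scope ring_scope.

(* A positive root of a rank-r root system is encoded by its coefficient
   vector with respect to the simple roots alpha_1..alpha_r:
   beta j = a_{beta,j} for 1 <= j <= r (values at other indices unused). *)

Definition root_height (r : nat) (beta : nat -> nat) : nat :=
  (\sum_(1 <= k < r.+1) beta k)%N.

Definition vj {R : realType} (r : nat) (PhiPlus : seq (nat -> nat)) (j : nat) : R :=
  \sum_(beta <- PhiPlus) ((beta j)%:R / (root_height r beta)%:R).

Definition A_root (i k : nat) : nat -> nat := fun j => nat_of_bool ((i <= j) && (j <= k))%N.

Definition posroots_A (r : nat) : seq (nat -> nat) :=
  [seq A_root ik.1 ik.2 | ik <- [seq (i, k) | i <- iota 1 r, k <- iota i (r.+1 - i)]].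

From HB Require Import structures.
From mathcomp Require Import all_boot all_order all_algebra.
From mathcomp Require Import all_classical all_reals all_analysis.
From mathcomp Require Import zify ring.

(* Writing the positive roots as alpha_i + ... + alpha_k, v_j is the sum of
   1/(k+1-i) over 1 <= i <= j <= k <= r, and the substitution (i, k) -> (r+1-k, r+1-i)
   gives the symmetry.  For the bound j, pair each term with its mirror under
   (i, k) -> (j+1-i, r+j-k): the two denominators add up to r+1, so by the AM-HM
   inequality each pair contributes at least 4/(r+1), and there are j(r+1-j) >= j(r+1)/2
   terms.  For the logarithmic bound, the row sum over k for fixed i dominates the
   telescoping sum of ln(1 + 1/m), hence is at least ln((r+2-i)/(j+1-i)) >= ln(r/j). *)

Set Implicit Arguments. Unset Strict Implicit. Unset Printing Implicit Defensive.
Import Order.TTheory GRing.Theory Num.Theory.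
Local Open Scope ring_scope.

Lemma A_root_eq0 (i k j : nat) : (j < i)%N || (k < j)%N -> A_root i k j = 0%N.
Proof. by rewrite /A_root !ltnNge => /orP[] /negbTE->; rewrite ?andbF. Qed.

Lemma root_height_A_root (r i k : nat) : (1 <= i)%N -> (k <= r)%N ->
  root_height r (A_root i k) = (k.+1 - i)%N.
Proof.
move=> i_ge1 k_ler; rewrite /root_height.
suff -> : (\sum_(1 <= l < r.+1) A_root i k l = (minn k r).+1 - i)%N.
  by rewrite (minn_idPl k_ler).
elim: {k_ler}r => [|r IHr]; first by rewrite big_geq //; lia.
rewrite big_nat_recr //= IHr /A_root.
by case: (leqP i r.+1) => ?; case: (leqP r.+1 k) => ? /=; lia.
Qed.

Definition vA_square (R : realType) (r j : nat) : R :=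
  \sum_(1 <= i < r.+1) \sum_(1 <= k < r.+1) ((A_root i k j)%:R / (k.+1 - i)%:R).

Definition vA (R : realType) (r j : nat) : R :=
  \sum_(1 <= i < j.+1) \sum_(j <= k < r.+1) ((k.+1 - i)%:R)^-1.

Lemma vj_A_square (R : realType) (r j : nat) :
  vj (R:=R) r (posroots_A r) j = vA_square R r j.
Proof.
rewrite /vj /posroots_A big_map big_allpairs_dep /vA_square.
have -> : iota 1 r = index_iota 1 r.+1 by rewrite /index_iota subn1.
apply: eq_big_nat => i /andP[i_ge1 i_ler].
rewrite -[iota i _]/(index_iota i r.+1) [RHS](big_cat_nat _ (n:=i)) //=; last by lia.
rewrite [X in X + _]big1_seq ?add0r => [|k]; last first.
  rewrite mem_index_iota => /andP[_ k_lti].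
  by rewrite A_root_eq0 ?mul0r //; apply/orP; lia.
by apply: eq_big_nat => k /andP[i_lek k_ler]; rewrite root_height_A_root.
Qed.

Lemma vA_square_sym (R : realType) (r j : nat) : (1 <= j <= r)%N ->
  vA_square R r (r.+1 - j) = vA_square R r j.
Proof.
move=> j_range; rewrite /vA_square big_nat_rev /=.
under eq_bigr do rewrite big_nat_rev /=.
rewrite exchange_big /=; apply: eq_big_nat => k k_range; apply: eq_big_nat => i i_range.
have -> : A_root (1 + r.+1 - i.+1) (1 + r.+1 - k.+1) (r.+1 - j) = A_root k i j.
  by rewrite /A_root; congr nat_of_bool; apply/idP/idP => /andP[? ?]; apply/andP; lia.
rewrite /A_root; case: (leqP k j) => ?; case: (leqP j i) => ? /=; rewrite ?mul0r //.
congr (_ / _%:R); lia.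
Qed.

Lemma vA_squareE (R : realType) (r j : nat) : (1 <= j <= r)%N ->
  vA_square R r j = vA R r j.
Proof.
move=> /andP[j_ge1 j_ler]; rewrite /vA_square /vA (big_cat_nat _ (n:=j.+1)) //=.
rewrite [X in _ + X]big1_seq ?addr0 => [|i]; last first.
  rewrite mem_index_iota => /andP[_ j_lti]; rewrite big1 // => k _.
  by rewrite A_root_eq0 ?mul0r //; apply/orP; lia.
apply: eq_big_nat => i /andP[i_ge1 i_lej].
rewrite (big_cat_nat _ (n:=j)) //=; last by lia.
rewrite big1_seq ?add0r => [|k]; last first.
  rewrite mem_index_iota => /andP[_ k_ltj].
  by rewrite A_root_eq0 ?mul0r //; apply/orP; lia.
apply: eq_big_nat => k /andP[j_lek _].
by rewrite /A_root (_ : (_ && _) = true) ?mul1r //; apply/andP; lia.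
Qed.

Lemma four_le_mulD_invD (R : realFieldType) (x y : R) : 0 < x -> 0 < y ->
  4 <= (x + y) * (x^-1 + y^-1).
Proof.
move=> x_gt0 y_gt0; rewrite -subr_ge0.
have -> : (x + y) * (x^-1 + y^-1) - 4 = (x - y) ^+ 2 / (x * y).
  by field; rewrite !gt_eqF.
by rewrite divr_ge0 ?sqr_ge0 // ltW // mulr_gt0.
Qed.

Lemma vA_rev (R : realType) (r j : nat) : (j <= r)%N ->
  vA R r j = \sum_(1 <= i < j.+1) \sum_(j <= k < r.+1) ((r - k + i)%:R)^-1.
Proof.
move=> j_ler; rewrite /vA big_nat_rev; apply: eq_big_nat => i i_range.
by rewrite big_nat_rev; apply: eq_big_nat => k k_range; congr (_%:R^-1); lia.
Qed.

Lemma vA_ge_pairing (R : realType) (r j : nat) : (j <= r)%N ->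
  (2 * (j * (r.+1 - j)))%:R <= r.+1%:R * vA R r j.
Proof.
move=> j_ler; rewrite -(orFb (_ <= _)) -[false]/(2 == 0)%N -lerMn2r.
rewrite [X in _ <= X]mulr2n -mulrDr {2}vA_rev // /vA.
rewrite -big_split mulr_sumr -mulrnA.
have -> : (2 * (j * (r.+1 - j)) * 2 = \sum_(1 <= i < j.+1) \sum_(j <= k < r.+1) 4)%N.
  by rewrite !sum_nat_const_nat; nia.
rewrite natr_sum; apply: ler_sum_nat => i /andP[i_ge1 i_lej].
rewrite -big_split mulr_sumr natr_sum; apply: ler_sum_nat => k /andP[j_lek k_ler].
have -> : r.+1%:R = (k.+1 - i)%:R + (r - k + i)%:R :> R by rewrite -natrD; congr _%:R; lia.
by apply: four_le_mulD_invD; rewrite ltr0n; lia.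
Qed.

Lemma vA_ge_j (R : realType) (r j : nat) : (2 * j <= r + 1)%N -> j%:R <= vA R r j.
Proof.
move=> j_le_half; have j_ler : (j <= r)%N by lia.
rewrite -(ler_pM2l (ltr0Sn R r)); apply: le_trans (vA_ge_pairing _ j_ler).
by rewrite -natrM ler_nat; nia.
Qed.

Lemma ln_addr1_sub_le (R : realType) (x : R) : 0 < x -> ln (x + 1) - ln x <= x^-1.
Proof.
move=> x_gt0; rewrite -ln_div ?posrE ?addr_gt0 //.
rewrite mulrDl divff ?gt_eqF // mul1r; apply: le_ln1Dx.
by rewrite (@lt_le_trans _ _ 0) ?ltrN10 // invr_ge0 ltW.
Qed.

Lemma ln_addn_sub_le (R : realType) (x : R) (n : nat) : 0 < x ->
  ln (x + n%:R) - ln x <= \sum_(m < n) (x + m%:R)^-1.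
Proof.
move=> x_gt0; elim: n => [|n IHn]; first by rewrite big_ord0 addr0 subrr.
rewrite big_ord_recr /= -(subrK (ln (x + n%:R)) (ln (x + n.+1%:R))) -addrA addrC.
rewrite lerD // -natr1 addrA ln_addr1_sub_le // ltr_wpDr ?ler0n //.
Qed.

Lemma vA_row_ge_ln (R : realType) (r j i : nat) : (1 <= i <= j)%N -> (j <= r)%N ->
  ln (r%:R : R) - ln (j%:R : R) <= \sum_(j <= k < r.+1) ((k.+1 - i)%:R)^-1.
Proof.
move=> /andP[i_ge1 i_lej] j_ler; set x : R := (j.+1 - i)%:R.
have x_gt0 : 0 < x by rewrite ltr0n; lia.
have -> : \sum_(j <= k < r.+1) ((k.+1 - i)%:R)^-1 = \sum_(m < r.+1 - j) (x + m%:R)^-1 :> R.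
  rewrite -{1}[j]add0n big_addn big_mkord; apply: eq_bigr => m _.
  by rewrite -natrD; congr _%:R^-1; lia.
apply: le_trans (ln_addn_sub_le _ x_gt0); rewrite /x -natrD.
have -> : (j.+1 - i + (r.+1 - j) = r.+2 - i)%N by lia.
have pos n : (0 < n)%N -> (n%:R : R) \is Num.pos by rewrite posrE ltr0n.
rewrite -!ln_div ?pos; try lia.
rewrite ler_ln ?posrE ?divr_gt0 ?ltr0n; try lia.
rewrite ler_pdivrMr ?ltr0n; last lia.
rewrite mulrAC ler_pdivlMr ?ltr0n; last lia.
by rewrite -!natrM ler_nat; nia.
Qed.

Lemma vA_ge_ln (R : realType) (r j : nat) : (1 <= j <= r)%N ->
  j%:R * (ln (r%:R : R) - ln (j%:R : R)) <= vA R r j.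
Proof.
move=> /andP[j_ge1 j_ler].
rewrite mulr_natl -[X in _ *+ X]/(j.+1.-1) -subn1 -sumr_const_nat.
by apply: ler_sum_nat => i i_range; apply: vA_row_ge_ln.
Qed.

Theorem lemma2p2 (R : realType) (r j : nat) (hj1 : (1 <= j)%N) (hj2 : (2 * j <= r + 1)%N) :
  vj (R:=R) r (posroots_A r) j = vj (R:=R) r (posroots_A r) (r.+1 - j) /\
  j%:R * Num.max 1 (ln (r%:R : R) - ln (j%:R : R)) <= vj (R:=R) r (posroots_A r) j.
Proof.
have j_range : (1 <= j <= r)%N by lia.
split; first by rewrite !vj_A_square vA_square_sym.
rewrite vj_A_square vA_squareE // maxr_pMr ?ler0n // ge_max mulr1.
by rewrite vA_ge_j // vA_ge_ln.
Qed.
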